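(* Let $L=\{\ell_1,\dots,\ell_n\}$, $R=\{r_1,\dots,r_d\}$ and let $G$ be a spanning tree of the complete bipartite graph on $L\sqcup R$ with right degree vector $v=(v_1,\dots,v_d)$. For each $r_k\in R$ there is a unique maximal tope with right degree vector $v-\mathbf{1}_{[d]\setminus\{k\}}$ contained in $G$.
   Context: Graphs are identified with edge sets; the right degree vector is $(\deg r_1,\dots,\deg r_d)$. $\mathbf{1}_{A}$ denotes the 0/1 indicator vector of $A\subseteq[d]$, so $v-\mathbf{1}_{[d]\setminus\{k\}}$ subtracts $1$ from every coordinate except the $k$-th. Here a maximal tope with right degree vector $w$ is a bipartite graph on $L\sqcup R$ in which every node of $L$ has degree exactly $1$ and $r_i$ has degree $w_i$ for each $i$. *)

From mathcomp Require Import all_boot all_order all_algebra.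
Set Implicit Arguments. Unset Strict Implicit. Unset Printing Implicit Defensive.

(* Bipartite graphs on L ⊔ R with L = 'I_n, R = 'I_d are identified with
   their edge sets G : {set 'I_n * 'I_d}; (l, r) \in G is the edge {ℓ_l, r_r}. *)

Definition badj (n d : nat) (G : {set 'I_n * 'I_d}) : rel ('I_n + 'I_d) :=
  fun x y => match x, y with
             | inl l, inr r => (l, r) \in G
             | inr r, inl l => (l, r) \in G
             | _, _ => false
             end.

Definition bconnected (n d : nat) (G : {set 'I_n * 'I_d}) : Prop :=
  forall x y : 'I_n + 'I_d, connect (badj G) x y.

Definition bacyclic (n d : nat) (G : {set 'I_n * 'I_d}) : Prop :=
  forall p : seq ('I_n + 'I_d), uniq p -> 2 < size p -> ~~ cycle (badj G) p.

Definition spanning_tree (n d : nat) (G : {set 'I_n * 'I_d}) : Prop :=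
  bconnected G /\ bacyclic G.

Definition ldeg (n d : nat) (G : {set 'I_n * 'I_d}) (l : 'I_n) : nat :=
  #|[set e in G | e.1 == l]|.

Definition rdeg (n d : nat) (G : {set 'I_n * 'I_d}) (r : 'I_d) : nat :=
  #|[set e in G | e.2 == r]|.

(* Maximal tope with right degree vector w (integer-valued, to avoid
   truncated subtraction): every left node has degree exactly 1 and r_i has
   degree w_i. *)
Definition maximal_tope (n d : nat) (w : 'I_d -> int) (T : {set 'I_n * 'I_d})
  : Prop :=
  (forall l : 'I_n, ldeg T l = 1%N) /\
  (forall i : 'I_d, ((rdeg T i)%:Z = w i)%R).

(* Root the tree at r_k.  Every other vertex has a unique neighbour closer to
   r_k, its parent: two parents at equal depth would close a cycle through
   their first common ancestor.  Joining every l to its parent gives a maximal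
   tope inside G, and each r_i loses exactly the edge to its own parent if
   i <> k and nothing if i = k.  Conversely, let T be such a tope inside G.  An
   edge of T from l down to a child r of l forces, by the degree count at r, a
   child l' of r whose edge in T goes down again, one level deeper; so T has
   no downward edge at all and is the tope of parents. *)

From mathcomp Require Import all_boot all_order all_algebra.
From mathcomp Require Import zify.
Set Implicit Arguments. Unset Strict Implicit. Unset Printing Implicit Defensive.

Section RootedTree.
Variables (T : finType) (e : rel T) (root : T).
Hypothesis e_sym : symmetric e.
Hypothesis connect_root : forall x, connect e x root.
Hypothesis acyclic : forall p : seq T, uniq p -> 2 < size p -> ~~ cycle e p.

Definition reaches_root_in (x : T) (m : nat) : bool :=
  [exists p : m.-tuple T, path e x p && (last x p == root)].

Lemma exists_reaches_root x : exists m, reaches_root_in x m.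
Proof.
have /connectP [p p_path p_last] := connect_root x.
by exists (size p); apply/existsP; exists (in_tuple p); rewrite p_path -p_last eqxx.
Qed.

Definition depth (x : T) : nat := ex_minn (exists_reaches_root x).

Lemma depth_le_size x p : path e x p -> last x p = root -> depth x <= size p.
Proof.
move=> p_path p_last; rewrite /depth; case: ex_minnP => m _; apply.
by apply/existsP; exists (in_tuple p); rewrite p_path p_last eqxx.
Qed.

Lemma shortest_path x :
  exists p, [/\ path e x p, last x p = root & size p = depth x].
Proof.
rewrite /depth; case: ex_minnP => m /existsP [p /andP [p_path /eqP p_last]] _.
by exists p; rewrite size_tuple.
Qed.

Lemma depth_root : depth root = 0.
Proof. by apply/eqP; rewrite -leqn0 (@depth_le_size root [::]). Qed.

Lemma depth_eq0 x : (depth x == 0) = (x == root).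
Proof.
apply/eqP/eqP => [|->]; last exact: depth_root.
by have [[|y p] [_ p_last <-]] := shortest_path x.
Qed.

Lemma depth_edge_le x y : e x y -> depth x <= (depth y).+1.
Proof.
move=> exy; have [p [p_path p_last <-]] := shortest_path y.
by rewrite (@depth_le_size x (y :: p)) //= exy.
Qed.

Definition parent (x y : T) : bool := e x y && (depth x == (depth y).+1).

Lemma parent_edge x y : parent x y -> e x y.
Proof. by case/andP. Qed.

Lemma parent_depth x y : parent x y -> depth x = (depth y).+1.
Proof. by case/andP=> _ /eqP. Qed.

Lemma exists_parent x : x != root -> exists y, parent x y.
Proof.
rewrite -depth_eq0 => x_nroot.
have [[|y p] [p_path p_last p_size]] := shortest_path x.
  by rewrite -p_size in x_nroot.
move: p_path => /= /andP [exy p_path]; exists y; rewrite /parent exy /=.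
have := depth_le_size p_path p_last; have := depth_edge_le exy.
by move: p_size => /= <-; lia.
Qed.

Lemma root_no_parent y : ~~ parent root y.
Proof. by rewrite /parent depth_root andbF. Qed.

Lemma parent_asym x y : parent x y -> ~~ parent y x.
Proof. by move=> /parent_depth dx; apply/negP => /parent_depth; lia. Qed.

Lemma no_closing_edge x s y :
  uniq (x :: rcons s y) -> 0 < size s -> path e x (rcons s y) -> ~~ e y x.
Proof.
move=> p_uniq s_gt0 p_path; apply/negP => eyx.
have := acyclic p_uniq; rewrite /= size_rcons => /(_ s_gt0).
by rewrite rcons_path p_path last_rcons eyx.
Qed.

(* The path climbs from x and y to their first common ancestor. *)
Lemma same_depth_path E x y : x != y -> depth x = E -> depth y = E ->
  exists s, [/\ path e x (rcons s y), uniq (x :: rcons s y), 0 < size s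
              & all (fun z => depth z < E) s].
Proof.
elim: E x y => [|E IH] x y x_ny dx dy.
  move: x_ny; move/eqP: dx; move/eqP: dy; rewrite !depth_eq0.
  by move=> /eqP-> /eqP->; rewrite eqxx.
have [px xpx] : exists px, parent x px.
  by apply: exists_parent; rewrite -depth_eq0 dx.
have [py ypy] : exists py, parent y py.
  by apply: exists_parent; rewrite -depth_eq0 dy.
have dpx : depth px = E by move: (parent_depth xpx); lia.
have dpy : depth py = E by move: (parent_depth ypy); lia.
have epx := parent_edge xpx; have epy : e py y by rewrite e_sym (parent_edge ypy).
have uniq_ends s :
    uniq s -> all (fun z => depth z < E.+1) s -> uniq (x :: rcons s y).
  move=> s_uniq /allP s_low.
  rewrite /= mem_rcons inE negb_or x_ny rcons_uniq s_uniq.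
  by rewrite andbT; apply/andP; split; apply/negP => /s_low; rewrite ?dx ?dy ltnn.
have [px_py|px_npy] := eqVneq px py.
  subst px; exists [:: py]; split=> //; last by rewrite /= dpy ltnSn.
    by rewrite /= epx epy.
  by apply: uniq_ends; rewrite //= dpy ltnSn.
have [s [s_path s_uniq s_gt0 s_low]] := IH _ _ px_npy dpx dpy.
have s'_low : all (fun z => depth z < E.+1) (px :: rcons s py).
  rewrite /= dpx ltnSn all_rcons dpy ltnSn /=.
  by apply: sub_all s_low => z; apply: ltnW.
exists (px :: rcons s py); split=> //; last exact: uniq_ends.
by rewrite rcons_cons /= epx rcons_path s_path last_rcons epy.
Qed.

Lemma edge_depth_neq x y : e x y -> x != y -> depth x != depth y.
Proof.
move=> exy x_ny; apply/eqP => dxy.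
have [s [s_path s_uniq s_gt0 _]] := same_depth_path x_ny erefl (esym dxy).
by move: (no_closing_edge s_uniq s_gt0 s_path); rewrite e_sym exy.
Qed.

Lemma edge_parent x y : e x y -> x != y -> parent x y || parent y x.
Proof.
move=> exy x_ny; rewrite /parent exy e_sym exy /=.
have := edge_depth_neq exy x_ny; have := depth_edge_le exy.
by rewrite e_sym in exy; have := depth_edge_le exy; lia.
Qed.

Lemma parent_uniq x y z : parent x y -> parent x z -> y = z.
Proof.
move=> xy xz; apply/eqP; apply: contraT => y_nz.
have dyz : depth y = depth z.
  by have := parent_depth xy; have := parent_depth xz; lia.
have [s [s_path s_uniq _ s_low]] := same_depth_path y_nz erefl (esym dyz).
have x_out : x \notin y :: rcons s z.
  apply/negP; rewrite inE mem_rcons inE => /or3P [/eqP x_y|/eqP x_z|x_s].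
  - by move: (parent_depth xy); rewrite x_y; lia.
  - by move: (parent_depth xz); rewrite x_z; lia.
  - by move/allP: s_low => /(_ x x_s); rewrite (parent_depth xy); lia.
have := @no_closing_edge x (y :: s) z; rewrite rcons_cons cons_uniq x_out s_uniq /=.
by rewrite (parent_edge xy) s_path e_sym (parent_edge xz) => /(_ isT isT isT).
Qed.

End RootedTree.

Lemma badj_sym n d (G : {set 'I_n * 'I_d}) : symmetric (badj G).
Proof. by case=> x; case. Qed.

Lemma ldeg1P n d (T : {set 'I_n * 'I_d}) l :
  reflect (exists r, forall r', ((l, r') \in T) = (r' == r)) (ldeg T l == 1).
Proof.
apply: (iffP cards1P) => [[[l0 r0] T_l]|[r T_l]].
  have : (l0, r0) \in [set p in T | p.1 == l] by rewrite T_l set11.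
  rewrite inE => /andP [_ /= /eqP l0_l]; subst l0; exists r0 => r'.
  by move/setP/(_ (l, r')): T_l; rewrite !inE eqxx andbT xpair_eqE eqxx.
exists (l, r); apply/setP => [[l' r']]; rewrite !inE xpair_eqE /=.
by case: (eqVneq l' l) => [->|]; rewrite ?andbF ?T_l ?andbT.
Qed.

Lemma subset_ldeg1_eq n d (T1 T2 : {set 'I_n * 'I_d}) :
  (forall l, ldeg T1 l = 1) -> (forall l, ldeg T2 l = 1) ->
  T1 \subset T2 -> T1 = T2.
Proof.
move=> T1_ldeg T2_ldeg T12; apply/eqP; rewrite eqEsubset T12.
apply/subsetP => [[l r]] lrT2.
have /ldeg1P [r1 T1_l] := introT eqP (T1_ldeg l).
have /ldeg1P [r2 T2_l] := introT eqP (T2_ldeg l).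
have l_r1 : (l, r1) \in T1 by rewrite T1_l.
by move: (subsetP T12 _ l_r1) lrT2; rewrite !T2_l T1_l => /eqP-> /eqP->.
Qed.

Section RootedTope.
Variables (n d : nat) (G : {set 'I_n * 'I_d}) (k : 'I_d).
Hypotheses (G_connected : bconnected G) (G_acyclic : bacyclic G).

Local Notation root := (inr k : 'I_n + 'I_d).
Let connect_root x : connect (badj G) x root := G_connected x root.
Local Notation parent := (parent connect_root).
Local Notation depth := (depth connect_root).

Definition rooted_tope : {set 'I_n * 'I_d} := [set p | parent (inl p.1) (inr p.2)].

Lemma rooted_tope_sub : rooted_tope \subset G.
Proof. by apply/subsetP => [[l r]]; rewrite inE => /parent_edge. Qed.

Lemma ldeg_rooted_tope l : ldeg rooted_tope l = 1.
Proof.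
have [[l'|r] l_r] := exists_parent connect_root (x := inl l) isT.
  by have := parent_edge l_r.
apply/eqP/ldeg1P; exists r => r'; rewrite inE /=.
apply/idP/eqP => [l_r'|->//].
by case: (parent_uniq (badj_sym G) G_acyclic l_r' l_r).
Qed.

Lemma rdeg_rooted_tope i : rdeg G i = rdeg rooted_tope i + (i != k).
Proof.
rewrite /rdeg -(cardsID rooted_tope); congr (_ + _).
  apply: eq_card => -[l r]; rewrite !inE /=.
  case lr: (parent _ _); rewrite ?andbF ?andbT //.
  by have lrG : (l, r) \in G := parent_edge lr; rewrite lrG.
have -> : [set p in G | p.2 == i] :\: rooted_tope =
          [set p | parent (inr i) (inl p.1) & p.2 == i].
  apply/setP => [[l r]]; rewrite !inE /=; apply/idP/idP.
    case/and3P => lr_ntope lrG /eqP r_i; subst r; rewrite eqxx andbT.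
    have := edge_parent (badj_sym G) connect_root G_acyclic
      (x := inl l) (y := inr i).
    by rewrite (negbTE lr_ntope); apply.
  case/andP => i_l /eqP r_i; subst r; rewrite eqxx andbT (parent_asym i_l).
  exact: (parent_edge i_l).
have [->|i_nk] := eqVneq i k.
  apply/eqP; rewrite cards_eq0; apply/eqP/setP => p.
  by rewrite !inE (negbTE (root_no_parent _ _)).
have i_nroot : inr i != root by apply: contra_neq i_nk; case.
have [[l|r] i_l] := exists_parent connect_root i_nroot; last first.
  by have := parent_edge i_l.
rewrite (_ : [set p | _ & _] = [set (l, i)]) ?cards1 //; apply/setP => [[l' r]].
rewrite !inE xpair_eqE /=; apply/andP/andP => [[i_l' r_i]|[/eqP-> r_i]] //.
by case: (parent_uniq (badj_sym G) G_acyclic i_l' i_l) => ->.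
Qed.

Lemma subset_rooted_tope T :
    (forall l, ldeg T l = 1) -> (forall i, rdeg T i = rdeg rooted_tope i) ->
  T \subset G -> T \subset rooted_tope.
Proof.
move=> T_ldeg T_rdeg T_sub; apply: contraT => /subsetPn [p0 p0T p0_ntope].
pose deep := [pred p | (p \in T) && (p \notin rooted_tope)].
have deep_p0 : deep p0 by rewrite /= p0T p0_ntope.
case: (arg_maxnP (fun p => depth (inl p.1)) deep_p0) => -[l r] /andP [lrT].
rewrite inE /= => lr_ntope lr_max.
have r_l : parent (inr r) (inl l).
  have := edge_parent (badj_sym G) connect_root G_acyclic
    (x := inl l) (y := inr r).
  by rewrite (negbTE lr_ntope); apply; first exact: subsetP lrT.
have [[l' r'] l'r'_tope l'r'_nT] :
    exists2 p, p \in [set p in rooted_tope | p.2 == r]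
             & p \notin [set p in T | p.2 == r].
  apply/subsetPn/negP => tope_T.
  have /subset_cardP/(_ tope_T)/(_ (l, r)) := esym (T_rdeg r).
  by rewrite !inE lrT eqxx andbT (negbTE lr_ntope).
rewrite !inE /= andbC in l'r'_tope l'r'_nT.
case/andP: l'r'_tope => /eqP r'_r l'_r; subst r'; rewrite eqxx andbT in l'r'_nT.
have /ldeg1P [r'' T_l'] := introT eqP (T_ldeg l').
have l'r''_T : (l', r'') \in T by rewrite T_l'.
have l'r''_ntope : ~~ parent (inl l') (inr r'').
  apply: contraNN l'r'_nT => l'_r''.
  by case: (parent_uniq (badj_sym G) G_acyclic l'_r l'_r'') => ->; rewrite T_l'.
have := lr_max (l', r''); rewrite /= l'r''_T inE l'r''_ntope => /(_ isT).
by rewrite (parent_depth l'_r) (parent_depth r_l) ltnNge leqnSn.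
Qed.

End RootedTope.

Theorem proposition2p9 (n d : nat) (G : {set 'I_n * 'I_d}) :
  spanning_tree G ->
  forall k : 'I_d,
    exists! T : {set 'I_n * 'I_d},
      maximal_tope (fun i : 'I_d => ((rdeg G i)%:Z - (i != k)%:Z)%R) T
      /\ T \subset G.
Proof.
move=> [G_connected G_acyclic] k.
have rdeg_tope i : rdeg G i = rdeg (rooted_tope k G_connected) i + (i != k).
  exact: rdeg_rooted_tope.
exists (rooted_tope k G_connected); split.
  split; last exact: rooted_tope_sub.
  split=> [l|i]; first exact: ldeg_rooted_tope.
  by rewrite rdeg_tope PoszD GRing.addrK.
move=> T [[T_ldeg T_rdeg] T_sub]; apply/esym/subset_ldeg1_eq => //.
  exact: ldeg_rooted_tope.
apply: (subset_rooted_tope G_acyclic) => // i.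
by have := T_rdeg i; rewrite rdeg_tope PoszD GRing.addrK => -[].
Qed.
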